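(* For every nonnegative integer $n$, $$\sum_{k=0}^{\infty}(-1)^k(4k+1)\,\frac{(-3n)_k\,(-2n+\tfrac16)_k\,(\tfrac12)_k}{k!\,(2n+\tfrac43)_k\,(3n+\tfrac32)_k}=\left(\frac{2^2 3^3}{5^5}\right)^n\frac{(\tfrac56)_n(\tfrac12)_n(\tfrac76)_n^2}{(\tfrac{7}{15})_n(\tfrac{13}{15})_n(\tfrac{16}{15})_n(\tfrac{4}{15})_n}.$$ (The sum is finite, since $(-3n)_k=0$ for $k>3n$.)
   Context: $(a)_j=\Gamma(a+j)/\Gamma(a)=a(a+1)\cdots(a+j-1)$ denotes the rising factorial (Pochhammer symbol), with $(a)_0=1$. *)

From HB Require Import structures.
From mathcomp Require Import all_boot all_order all_algebra.
Set Implicit Arguments. Unset Strict Implicit. Unset Printing Implicit Defensive.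
Import Order.TTheory GRing.Theory Num.Theory.
Local Open Scope ring_scope.

Definition poch (R : nzRingType) (a : R) (j : nat) : R :=
  \prod_(i < j) (a + i%:R).

Definition term7 (n k : nat) : rat :=
  (-1) ^+ k * (4 * k%:R + 1)
  * (poch (- (3 * n)%:R) k * poch (- (2 * n)%:R + 1/6) k * poch (1/2) k)
  / ((k`!)%:R * poch ((2 * n)%:R + 4/3) k * poch ((3 * n)%:R + 3/2) k).

(* Proof by creative telescoping (Wilf-Zeilberger).  Write F(n,k) for the
   summand.  Zeilberger's algorithm produces a rational certificate R(n,k) such
   that, with G(n,k) = R(n,k) F(n,k),
     (n+7/15)(n+13/15)(n+16/15)(n+4/15) F(n+1,k)
       - 108/3125 (n+5/6)(n+1/2)(n+7/6)^2 F(n,k) = G(n,k+1) - G(n,k).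
   G(n,0) = 0 and G(n,k) = 0 for k > 3n+3, so summing over k shows that the
   sums S(n) obey the first-order recurrence satisfied by the right-hand side,
   and both equal 1 at n = 0. *)

From HB Require Import structures.
From mathcomp Require Import all_boot all_order all_algebra.
From mathcomp Require Import ring lra zify.
Import Order.TTheory GRing.Theory Num.Theory.
Set Implicit Arguments.
Unset Strict Implicit.
Unset Printing Implicit Defensive.
Local Open Scope ring_scope.

Section Pochhammer.
Variable R : nzRingType.
Implicit Types (a : R) (k m : nat).

Lemma poch0 a : poch a 0 = 1.
Proof. by rewrite /poch big_ord0. Qed.

Lemma pochS a k : poch a k.+1 = poch a k * (a + k%:R).
Proof. by rewrite /poch big_ord_recr. Qed.

Lemma pochD a m k : poch a (m + k) = poch a m * poch (a + m%:R) k.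
Proof.
elim: k => [|k IHk]; first by rewrite addn0 poch0 mulr1.
by rewrite addnS !pochS IHk natrD addrA mulrA.
Qed.

Lemma poch_addC a m k : poch a m * poch (a + m%:R) k = poch a k * poch (a + k%:R) m.
Proof. by rewrite -!pochD addnC. Qed.

Lemma poch_eq0 a m k : a + m%:R = 0 -> (m < k)%N -> poch a k = 0.
Proof. by move=> am0 /subnKC <-; rewrite pochD pochS am0 mulr0 mul0r. Qed.

End Pochhammer.

Lemma poch_shift (F : fieldType) (a : F) m k : poch a m != 0 ->
  poch (a + m%:R) k = poch a k * poch (a + k%:R) m / poch a m.
Proof. by move=> am_neq0; rewrite -poch_addC mulrC mulKf. Qed.

Lemma poch_gt0 (R : numDomainType) (a : R) k : 0 < a -> 0 < poch a k.
Proof. by move=> a_gt0; apply: prodr_gt0 => i _; rewrite ltr_wpDr. Qed.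

Lemma creative_telescoping (R : idomainType) (b a1 a0 : R) (t1 t0 G : nat -> R) N :
  b != 0 -> (forall k, b * (a1 * t1 k - a0 * t0 k) = G k.+1 - G k) ->
  G 0 = 0 -> G N = 0 ->
  a1 * \sum_(k < N) t1 k = a0 * \sum_(k < N) t0 k.
Proof.
move=> b_neq0 tele G0 GN; apply/eqP; rewrite -subr_eq0 -(mulrI_eq0 _ (mulfI b_neq0)).
rewrite !mulr_sumr -sumrB mulr_sumr.
under eq_bigr do rewrite tele.
by rewrite -(big_mkord xpredT (fun k => G k.+1 - G k)) telescope_sumr // G0 GN subrr.
Qed.

Lemma certificate_telescope (R : comPzRingType)
    (a1 a0 b s q r p0 p1 Y0 Y1 e w w1 t0 t1 : R) :
  e * (a1 * b * s - a0 * q) = - r * Y1 - p0 * Y0 ->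
  t1 = e * s * w -> b * t0 = e * q * w -> w1 * p1 = - w * r ->
  b * (a1 * t1 - a0 * t0) = w1 * p1 * Y1 - w * p0 * Y0.
Proof.
move=> cert -> shift_t0 succ_w; rewrite succ_w.
transitivity (w * (e * (a1 * b * s - a0 * q))); last by rewrite cert; ring.
by rewrite mulrBr [b * (a0 * t0)]mulrCA shift_t0; ring.
Qed.

Ltac nat_casts_ge0 :=
  repeat match goal with |- context [(?m%:R : rat)] =>
    is_var m;
    lazymatch goal with
    | _ : is_true (0 <= m%:R) |- _ => fail
    | _ => have := ler0n rat m; intro
    end
  end.

Ltac factor_neq0 :=
  lazymatch goal with
  | |- is_true ((_`!)%:R != 0) => by rewrite pnatr_eq0 -lt0n fact_gt0
  | |- is_true (poch _ _ != 0) => apply/lt0r_neq0/poch_gt0; lra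
  | |- _ => first [apply/lt0r_neq0; lra | apply/ltr0_neq0; lra]
  end.

(* Every denominator met below is a product of factorials, Pochhammer symbols
   with positive base, and linear forms of constant sign for n, k >= 0. *)
Ltac factors_neq0 :=
  repeat (apply/andP; split);
  repeat lazymatch goal with |- is_true (_ * _ != 0) => apply: mulf_neq0 end;
  nat_casts_ge0; factor_neq0.

(* The numerator parameters -3n and -2n+1/6 of [term7 n k] are lowered by 3
   and 2, and the two denominator symbols are lengthened by 2 and 3, so that
   [term7 n.+1 k] and [base_fac n * term7 n k] are polynomial multiples of
   [wterm n k] without dividing by the vanishing values of (-3n)_k. *)
Definition wterm (n k : nat) : rat :=
  let x := n%:R in
  (-1) ^+ k * poch (-3 * x - 3) k * poch (-2 * x - 11/6) k * poch (1/2) k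
  / ((k`!)%:R * poch (2 * x + 4/3) (k + 2) * poch (3 * x + 3/2) (k + 3)).

Definition wnum (x z : rat) : rat := (z - 3 * x - 3) * (z - 2 * x - 11/6) * (z + 1/2).
Definition wden (x z : rat) : rat := z * (z + 2 * x + 7/3) * (z + 3 * x + 7/2).

Definition succ_fac (x : rat) : rat :=
  (2 * x + 4/3) * (2 * x + 7/3) * (3 * x + 3/2) * (3 * x + 5/2) * (3 * x + 7/2).

Definition base_fac (x : rat) : rat :=
  (-3 * x - 3) * (-3 * x - 2) * (-3 * x - 1) * (-2 * x - 11/6) * (-2 * x - 5/6).

Definition shift_fac (x z : rat) : rat :=
  (z - 3 * x - 3) * (z - 3 * x - 2) * (z - 3 * x - 1) * (z - 2 * x - 11/6)
  * (z - 2 * x - 5/6) * (z + 2 * x + 4/3) * (z + 2 * x + 7/3) * (z + 3 * x + 3/2)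
  * (z + 3 * x + 5/2) * (z + 3 * x + 7/2).

Definition rec_coef1 (x : rat) : rat := (x + 7/15) * (x + 13/15) * (x + 16/15) * (x + 4/15).
Definition rec_coef0 (x : rat) : rat := (x + 5/6) * (x + 1/2) * (x + 7/6) ^+ 2.

(* Found by Zeilberger's algorithm.  Locked because its numerals are unary
   naturals, which unification must never evaluate. *)
HB.lock Definition cert_poly (x z : rat) : rat :=
  ((1151882200%:R + x * (24324874280%:R + x * (230105741538%:R
      + x * (1290988477314%:R + x * (4789279969848%:R + x * (12387313057392%:R
      + x * (22921918259904%:R + x * (30595073399064%:R + x * (29251724482944%:R
      + x * (19547598595968%:R + x * (8670816885888%:R + x * (2293338448512%:R
      + x * (273639679488%:R)))))))))))))
  + z * ((251001030%:R + x * (4118850141%:R + x * (30096835191%:R + x * (128655436266%:R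
      + x * (355746936852%:R + x * (664188216120%:R + x * (847370780136%:R
      + x * (729100730304%:R + x * (404775278784%:R + x * (130899193344%:R
      + x * (18721839744%:R)))))))))))
  + z * ((- 450839445%:R + x * (- 7635895869%:R + x * (- 57097803537%:R
      + x * (- 248253046074%:R + x * (- 695068021404%:R + x * (- 1309525320384%:R
      + x * (- 1681403624640%:R + x * (- 1452893244192%:R + x * (- 808642305216%:R
      + x * (- 261798386688%:R + x * (- 37443679488%:R)))))))))))
  + z * ((- 199451070%:R + x * (- 2365710984%:R + x * (- 12245591610%:R
      + x * (- 35988175584%:R + x * (- 65464833744%:R + x * (- 75281625504%:R
      + x * (- 53325918432%:R + x * (- 21232865664%:R + x * (- 3633009408%:R)))))))))
  + z * ((173632725%:R + x * (2159055360%:R + x * (11557752408%:R + x * (34773679080%:R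
      + x * (64272271392%:R + x * (74667515904%:R + x * (53196797952%:R
      + x * (21232865664%:R + x * (3633009408%:R)))))))))
  + z * ((60963840%:R + x * (491058288%:R + x * (1642192056%:R + x * (2908325088%:R
      + x * (2860386048%:R + x * (1473863040%:R + x * (309889152%:R)))))))
  + z * ((- 37308600%:R + x * (- 310988160%:R + x * (- 1066054608%:R
      + x * (- 1917328320%:R + x * (- 1901045376%:R + x * (- 982575360%:R
      + x * (- 206592768%:R)))))))
  + z * ((- 5715360%:R + x * (- 28086912%:R + x * (- 49268736%:R + x * (- 36951552%:R
      + x * (- 10077696%:R)))))
  + z * ((2857680%:R + x * (14043456%:R + x * (24634368%:R + x * (18475776%:R
      + x * (5038848%:R))))))))))))))
  / 72900000%:R.

Definition cert7 (n k : nat) : rat := wterm n k * wden n%:R k%:R * cert_poly n%:R k%:R.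

Section TermRelations.
Variables n k : nat.

Lemma term7S_wterm : term7 n.+1 k = (4 * k%:R + 1) * succ_fac n%:R * wterm n k.
Proof.
rewrite /term7.
have -> : - (3 * n.+1)%:R = -3 * n%:R - 3 :> rat by ring.
have -> : - (2 * n.+1)%:R + 1/6 = -2 * n%:R - 11/6 :> rat by field.
have -> : (2 * n.+1)%:R + 4/3 = 2 * n%:R + 4/3 + 2%:R :> rat by field.
have -> : (3 * n.+1)%:R + 3/2 = 3 * n%:R + 3/2 + 3%:R :> rat by field.
rewrite /wterm /succ_fac !(addnC k) !pochD !pochS !poch0.
by field; factors_neq0.
Qed.

Lemma term7_wterm :
  base_fac n%:R * term7 n k = (4 * k%:R + 1) * shift_fac n%:R k%:R * wterm n k.
Proof.
rewrite /term7.
have -> : - (3 * n)%:R = -3 * n%:R - 3 + 3%:R :> rat by ring.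
have -> : - (2 * n)%:R + 1/6 = -2 * n%:R - 11/6 + 2%:R :> rat by field.
have -> : (2 * n)%:R + 4/3 = 2 * n%:R + 4/3 :> rat by ring.
have -> : (3 * n)%:R + 3/2 = 3 * n%:R + 3/2 :> rat by ring.
have c3 : poch (-3 * n%:R - 3 : rat) 3 != 0 by rewrite !pochS poch0; factors_neq0.
have c2 : poch (-2 * n%:R - 11/6 : rat) 2 != 0 by rewrite !pochS poch0; factors_neq0.
rewrite (poch_shift k c3) (poch_shift k c2).
rewrite /wterm /base_fac /shift_fac !pochD !pochS !poch0.
by field; factors_neq0.
Qed.

Lemma wtermS : wterm n k.+1 * wden n%:R k.+1%:R = - wterm n k * wnum n%:R k%:R.
Proof.
rewrite /wterm /wden /wnum !addSn !pochS factS exprS.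
by field; factors_neq0.
Qed.

End TermRelations.

Lemma wz_certificate n k :
  (4 * k%:R + 1) * (rec_coef1 n%:R * base_fac n%:R * succ_fac n%:R
                    - 108/3125 * rec_coef0 n%:R * shift_fac n%:R k%:R)
  = - wnum n%:R k%:R * cert_poly n%:R k.+1%:R - wden n%:R k%:R * cert_poly n%:R k%:R.
Proof.
rewrite /rec_coef1 /rec_coef0 /base_fac /succ_fac /shift_fac /wnum /wden unlock.
by field.
Qed.

Lemma term7_telescope n k :
  base_fac n%:R * (rec_coef1 n%:R * term7 n.+1 k - 108/3125 * rec_coef0 n%:R * term7 n k)
  = cert7 n k.+1 - cert7 n k.
Proof.
exact: certificate_telescope (wz_certificate n k) (term7S_wterm n k)
  (term7_wterm n k) (wtermS n k).
Qed.

Lemma cert7_0 n : cert7 n 0 = 0.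
Proof. by rewrite /cert7 /wden !mul0r mulr0 mul0r. Qed.

Lemma wterm_eq0 n k : (3 * n.+1 < k)%N -> wterm n k = 0.
Proof.
move=> lt_k; rewrite /wterm (@poch_eq0 _ _ (3 * n.+1) k) ?mulr0 ?mul0r //.
by ring.
Qed.

Lemma cert7_eq0 n k : (3 * n.+1 < k)%N -> cert7 n k = 0.
Proof. by move=> lt_k; rewrite /cert7 wterm_eq0 // !mul0r. Qed.

Lemma term7_eq0 n k : (3 * n < k)%N -> term7 n k = 0.
Proof.
by move=> lt_k; rewrite /term7 (@poch_eq0 _ _ (3 * n)) ?addNr // !mul0r mulr0 mul0r.
Qed.

Lemma sum_term7_0 N : (0 < N)%N -> \sum_(k < N) term7 0 k = 1.
Proof.
case: N => // N _; rewrite big_ord_recl big1 => [|k _]; last exact: term7_eq0.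
by rewrite /term7 !poch0 fact0 expr0 /=; field.
Qed.

Lemma sum_term7_rec n N : (3 * n.+1 < N)%N ->
  rec_coef1 n%:R * \sum_(k < N) term7 n.+1 k
  = 108/3125 * rec_coef0 n%:R * \sum_(k < N) term7 n k.
Proof.
move=> lt_N; have base_neq0 : base_fac n%:R != 0 by rewrite /base_fac; factors_neq0.
exact: creative_telescoping base_neq0 (term7_telescope n) (cert7_0 n) (cert7_eq0 lt_N).
Qed.

(* The ratio c = 108/3125 is a parameter for the same reason as the lock on
   [cert_poly]. *)
Definition closed7 (c : rat) (n : nat) : rat :=
  c ^+ n * (poch (5/6 : rat) n * poch (1/2) n * poch (7/6) n ^+ 2)
  / (poch (7/15 : rat) n * poch (13/15) n * poch (16/15) n * poch (4/15) n).

Lemma closed7_0 c : closed7 c 0 = 1.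
Proof. by rewrite /closed7 !poch0 expr0; field. Qed.

Lemma closed7_rec c n :
  rec_coef1 n%:R * closed7 c n.+1 = c * rec_coef0 n%:R * closed7 c n.
Proof. by rewrite /closed7 /rec_coef1 /rec_coef0 !pochS exprS; field; factors_neq0. Qed.

Theorem theorem7 (n N : nat) (hN : (3 * n < N)%N) :
  \sum_(k < N) term7 n k =
  (((2 ^ 2 * 3 ^ 3)%:R / (5 ^ 5)%:R : rat) ^+ n)
  * (poch (5/6 : rat) n * poch (1/2) n * poch (7/6) n ^+ 2)
  / (poch (7/15 : rat) n * poch (13/15) n * poch (16/15) n * poch (4/15) n).
Proof.
change (\sum_(k < N) term7 n k = closed7 ((2 ^ 2 * 3 ^ 3)%:R / (5 ^ 5)%:R) n).
elim: n N hN => [|n IHn] N hN; first by rewrite sum_term7_0 // closed7_0.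
have coef1_neq0 : rec_coef1 n%:R != 0 by rewrite /rec_coef1; factors_neq0.
apply: (mulfI coef1_neq0); apply: etrans (sum_term7_rec hN) _.
rewrite (IHn N); first exact/esym/closed7_rec.
lia.
Qed.
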